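(* Every constantizable complete theory is strongly minimal.
   Context: A $T$-formula $\varphi(\overline{x})$ is constantizable if $T$ has an expansion $T'$ (a complete theory $T'\supseteq T$ in a larger language) such that $\varphi(\overline{x})$ is $T'$-equivalent to a Boolean combination of formulas of the forms $x\approx y$ and $x\approx c$, with variables $x,y$ and constant symbols $c$. A theory $T$ is constantizable if every $T$-formula is constantizable. $T$ is strongly minimal if for every formula $\varphi(x,\bar a)$ with parameters $\bar a$ from a model of $T$, either $\varphi(x,\bar a)$ or $\neg\varphi(x,\bar a)$ has finitely many solutions. *)

From Stdlib Require Import List Arith Fin.



Record lang := Lang {
  Fn : Type;                 (* function symbols (constants = arity 0) *)
  Rl : Type;
  far : Fn -> nat;
  rar : Rl -> nat
}.

Inductive term (L : lang) : Type :=
| tvar : nat -> term L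
| tapp : forall f : Fn L, (Fin.t (far L f) -> term L) -> term L.

Inductive form (L : lang) : Type :=
| ffal : form L
| feq  : term L -> term L -> form L
| frel : forall r : Rl L, (Fin.t (rar L r) -> term L) -> form L
| fneg : form L -> form L
| fand : form L -> form L -> form L
| fex  : nat -> form L -> form L.

Arguments tvar {L}.
Arguments ffal {L}.
Arguments tapp {L}.
Arguments feq {L}.
Arguments frel {L}.
Arguments fneg {L}.
Arguments fand {L}.
Arguments fex {L}.

Fixpoint tfree {L : lang} (x : nat) (t : term L) : Prop :=
  match t with
  | tvar y => y = x
  | tapp f a => exists i, tfree x (a i)
  end.

Fixpoint ffree {L : lang} (x : nat) (p : form L) : Prop :=
  match p with
  | ffal => False
  | feq t1 t2 => tfree x t1 \/ tfree x t2
  | frel r a => exists i, tfree x (a i)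
  | fneg q => ffree x q
  | fand q1 q2 => ffree x q1 \/ ffree x q2
  | fex y q => y <> x /\ ffree x q
  end.

Definition sentence {L : lang} (p : form L) : Prop := forall x, ~ ffree x p.

Record structure (L : lang) := Struct {
  dom :> Type;
  fint : forall f : Fn L, (Fin.t (far L f) -> dom) -> dom;
  rint : forall r : Rl L, (Fin.t (rar L r) -> dom) -> Prop
}.
Arguments fint {L}.
Arguments rint {L}.

Definition update {A : Type} (v : nat -> A) (x : nat) (a : A) : nat -> A :=
  fun y => if Nat.eqb y x then a else v y.

Fixpoint teval {L : lang} (M : structure L) (v : nat -> M) (t : term L) : M :=
  match t with
  | tvar x => v x
  | tapp f a => fint M f (fun i => teval M v (a i))
  end.

Fixpoint sat {L : lang} (M : structure L) (v : nat -> M) (p : form L) : Prop :=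
  match p with
  | ffal => False
  | feq t1 t2 => teval M v t1 = teval M v t2
  | frel r a => rint M r (fun i => teval M v (a i))
  | fneg q => ~ sat M v q
  | fand q1 q2 => sat M v q1 /\ sat M v q2
  | fex x q => exists a : M, sat M (update v x a) q
  end.

Definition theory (L : lang) := form L -> Prop.

Definition is_model {L : lang} (M : structure L) (T : theory L) : Prop :=
  inhabited M /\ forall p, T p -> forall v : nat -> M, sat M v p.

Definition entails {L : lang} (T : theory L) (p : form L) : Prop :=
  forall M : structure L, is_model M T -> forall v : nat -> M, sat M v p.

Definition complete_theory {L : lang} (T : theory L) : Prop :=
  (forall p, T p -> sentence p) /\
  (exists M : structure L, is_model M T) /\
  (forall p, sentence p -> entails T p -> T p) /\
  (forall p, sentence p -> T p \/ T (fneg p)).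

(** The larger language L' ⊇ L obtained by adding new function symbols
    [F] (arities [af]) and new relation symbols [R] (arities [ar]).
    Every language containing L is of this form up to renaming. *)
Definition ext (L : lang) (F R : Type) (af : F -> nat) (ar : R -> nat) : lang :=
  {| Fn := (Fn L + F)%type;
     Rl := (Rl L + R)%type;
     far := fun s => match s with inl f => far L f | inr g => af g end;
     rar := fun s => match s with inl r => rar L r | inr g => ar g end |}.

Section Translate.
Variables (L : lang) (F R : Type) (af : F -> nat) (ar : R -> nat).
Local Notation L' := (ext L F R af ar).

Fixpoint tr_term (t : term L) : term L' :=
  match t with
  | tvar x => tvar x
  | tapp f a => @tapp L' (inl f) (fun i => tr_term (a i))
  end.

Fixpoint tr_form (p : form L) : form L' :=
  match p with
  | ffal => ffal
  | feq t1 t2 => feq (tr_term t1) (tr_term t2)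
  | frel r a => @frel L' (inl r) (fun i => tr_term (a i))
  | fneg q => fneg (tr_form q)
  | fand q1 q2 => fand (tr_form q1) (tr_form q2)
  | fex x q => fex x (tr_form q)
  end.
End Translate.

Inductive boolcomb {L : lang} : form L -> Prop :=
| bc_fal : boolcomb ffal
| bc_vv : forall x y : nat, boolcomb (feq (tvar x) (tvar y))
| bc_vc : forall (x : nat) (c : Fn L) (a : Fin.t (far L c) -> term L),
    far L c = 0 -> boolcomb (feq (tvar x) (tapp c a))
| bc_neg : forall p, boolcomb p -> boolcomb (fneg p)
| bc_and : forall p q, boolcomb p -> boolcomb q -> boolcomb (fand p q).

Definition constantizable {L : lang} (T : theory L) (p : form L) : Prop :=
  exists (F R : Type) (af : F -> nat) (ar : R -> nat)
         (T' : theory (ext L F R af ar)),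
    complete_theory T' /\
    (forall s, T s -> T' (tr_form L F R af ar s)) /\
    exists psi : form (ext L F R af ar),
      boolcomb psi /\
      (forall x, ffree x psi -> ffree x p) /\
      (forall M : structure (ext L F R af ar), is_model M T' ->
         forall v : nat -> M, sat M v (tr_form L F R af ar p) <-> sat M v psi).

Definition constantizable_theory {L : lang} (T : theory L) : Prop :=
  forall p : form L, constantizable T p.

Definition finite_set {A : Type} (P : A -> Prop) : Prop :=
  exists l : list A, forall a, P a -> In a l.

(** For every model M, formula φ(x, ȳ) and parameters (given by the
    assignment v to the variables other than x), either φ(M, ā) or its
    complement is finite. *)
Definition strongly_minimal {L : lang} (T : theory L) : Prop :=
  forall M : structure L, is_model M T ->
  forall (p : form L) (x : nat) (v : nat -> M),
    finite_set (fun a : M => sat M (update v x a) p) \/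
    finite_set (fun a : M => ~ sat M (update v x a) p).

From Stdlib Require Import List Arith Lia Classical FunctionalExtensionality.
Import ListNotations.

(* Constantize phi(x, y) as a Boolean combination psi of equalities x = y, x = c in a
   complete expansion T' of T.  Such a psi comes with a bound K such that, whatever the
   parameters, psi(M, a) or its complement has at most K elements.  In a model of T',
   phi(M, a) = psi(M, a), so the L-sentence "for all parameters, phi or its negation has
   at most K solutions" holds in the L-reduct of that model; by completeness it belongs
   to T, hence holds in every model of T. *)

Lemma update_same {A : Type} (v : nat -> A) x a : update v x a x = a.
Proof. unfold update; rewrite Nat.eqb_refl; reflexivity. Qed.

Lemma update_other {A : Type} (v : nat -> A) x a y : y <> x -> update v x a y = v y.
Proof. intro Hyx; unfold update; destruct (Nat.eqb_spec y x); congruence. Qed.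

Section Coincidence.
Context {L : lang} (M : structure L).

Lemma teval_coincidence (t : term L) (v w : nat -> M) :
  (forall y, tfree y t -> v y = w y) -> teval M v t = teval M w t.
Proof.
  induction t as [n|f a IH]; simpl; intros H.
  - apply H; reflexivity.
  - f_equal; apply functional_extensionality; intro i; apply IH.
    intros y Hy; apply H; exists i; exact Hy.
Qed.

Lemma sat_coincidence (p : form L) : forall v w : nat -> M,
  (forall y, ffree y p -> v y = w y) -> (sat M v p <-> sat M w p).
Proof.
  induction p as [| t1 t2 | r a | q IH | q1 IH1 q2 IH2 | n q IH]; simpl; intros v w H.
  - tauto.
  - rewrite (teval_coincidence t1 v w), (teval_coincidence t2 v w); [tauto | |];
      intros; apply H; auto.
  - replace (fun i => teval M v (a i)) with (fun i => teval M w (a i)); [tauto |].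
    apply functional_extensionality; intro i; symmetry; apply teval_coincidence.
    intros y Hy; apply H; exists i; exact Hy.
  - rewrite (IH v w); tauto.
  - rewrite (IH1 v w), (IH2 v w); try tauto; intros; apply H; auto.
  - assert (Hu : forall a, sat M (update v n a) q <-> sat M (update w n a) q).
    { intro a; apply IH; intros y Hy; unfold update.
      destruct (Nat.eqb_spec y n); auto. }
    split; intros [a Ha]; exists a; apply Hu; exact Ha.
Qed.

Lemma teval_update_fresh (t : term L) u x a :
  ~ tfree x t -> teval M (update u x a) t = teval M u t.
Proof.
  intro Hx; apply teval_coincidence; intros y Hy.
  apply update_other; intros ->; contradiction.
Qed.

Lemma sat_sentence (p : form L) (v w : nat -> M) :
  sentence p -> sat M v p -> sat M w p.
Proof. intros Hp; apply sat_coincidence; intros y Hy; destruct (Hp y Hy). Qed.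

End Coincidence.

Lemma fin_bound (n : nat) (P : Fin.t n -> nat -> Prop) :
  (forall i, exists N, forall y, P i y -> y < N) -> exists N, forall i y, P i y -> y < N.
Proof.
  induction n as [|n IH]; intros H.
  - exists 0; intro i; inversion i.
  - destruct (H Fin.F1) as [N0 H0].
    destruct (IH (fun i => P (Fin.FS i)) (fun i => H (Fin.FS i))) as [N1 H1].
    exists (max N0 N1); intro i; pattern i; apply Fin.caseS'.
    + intros y Hy; specialize (H0 y Hy); lia.
    + intros j y Hy; specialize (H1 j y Hy); lia.
Qed.

Lemma term_free_bound {L : lang} (t : term L) : exists N, forall y, tfree y t -> y < N.
Proof.
  induction t as [n|f a IH]; simpl.
  - exists (S n); intros; lia.
  - destruct (fin_bound _ (fun i y => tfree y (a i)) IH) as [N HN].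
    exists N; intros y [i Hi]; exact (HN i y Hi).
Qed.

Lemma form_free_bound {L : lang} (p : form L) : exists N, forall y, ffree y p -> y < N.
Proof.
  induction p as [| t1 t2 | r a | q IH | q1 IH1 q2 IH2 | n q IH]; simpl.
  - exists 0; tauto.
  - destruct (term_free_bound t1) as [N1 H1], (term_free_bound t2) as [N2 H2].
    exists (max N1 N2); intros y [Hy|Hy]; [specialize (H1 y Hy) | specialize (H2 y Hy)]; lia.
  - destruct (fin_bound _ (fun i y => tfree y (a i)) (fun i => term_free_bound (a i)))
      as [N HN].
    exists N; intros y [i Hi]; exact (HN i y Hi).
  - exact IH.
  - destruct IH1 as [N1 H1], IH2 as [N2 H2].
    exists (max N1 N2); intros y [Hy|Hy]; [specialize (H1 y Hy) | specialize (H2 y Hy)]; lia.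
  - destruct IH as [N HN]; exists N; intros y [_ Hy]; exact (HN y Hy).
Qed.

Definition fall {L : lang} (x : nat) (q : form L) : form L := fneg (fex x (fneg q)).
Definition fimp {L : lang} (q r : form L) : form L := fneg (fand q (fneg r)).
Definition fdisj {L : lang} (q r : form L) : form L := fneg (fand (fneg q) (fneg r)).

(* [fexs N k q] binds the block of variables [N, ..., N + k - 1]; [override u N k f]
   is the matching assignment, sending [N + j] to [f j]. *)
Fixpoint fexs {L : lang} (N k : nat) (q : form L) : form L :=
  match k with 0 => q | S j => fexs N j (fex (N + j) q) end.

Fixpoint override {A : Type} (u : nat -> A) (N k : nat) (f : nat -> A) : nat -> A :=
  match k with 0 => u | S j => update (override u N j f) (N + j) (f j) end.

Fixpoint feq_some {L : lang} (x N k : nat) : form L :=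
  match k with 0 => ffal | S j => fdisj (feq_some x N j) (feq (tvar x) (tvar (N + j))) end.

Definition fat_most {L : lang} (x N k : nat) (q : form L) : form L :=
  fexs N k (fall x (fimp q (feq_some x N k))).

Fixpoint fclose {L : lang} (n : nat) (q : form L) : form L :=
  match n with 0 => q | S m => fall m (fclose m q) end.

Section Override.
Context {A : Type} (u : nat -> A) (N : nat).

Lemma override_below k f y : y < N -> override u N k f y = u y.
Proof.
  intro Hy; induction k as [|k IH]; simpl; [reflexivity|].
  rewrite update_other by lia; exact IH.
Qed.

Lemma override_at k f j : j < k -> override u N k f (N + j) = f j.
Proof.
  induction k as [|k IH]; simpl; intro Hj; [lia|].
  destruct (Nat.eq_dec j k) as [->|Hjk]; [apply update_same|].
  rewrite update_other by lia; apply IH; lia.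
Qed.

Lemma override_ext k f g :
  (forall i, i < k -> f i = g i) -> override u N k f = override u N k g.
Proof.
  induction k as [|k IH]; simpl; intro Hfg; [reflexivity|].
  rewrite IH, Hfg; [reflexivity | lia | intros i Hi; apply Hfg; lia].
Qed.

End Override.

Section DerivedSemantics.
Context {L : lang} (M : structure L).

Lemma sat_fall u x (q : form L) : sat M u (fall x q) <-> forall a, sat M (update u x a) q.
Proof.
  simpl; split; [intros H a; apply NNPP; intro; apply H; exists a | intros H [a Ha]]; auto.
Qed.

Lemma sat_fimp u (q r : form L) : sat M u (fimp q r) <-> (sat M u q -> sat M u r).
Proof. simpl; split; [intros H Hq; apply NNPP; auto | tauto]. Qed.

Lemma sat_fdisj u (q r : form L) : sat M u (fdisj q r) <-> sat M u q \/ sat M u r.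
Proof. simpl; split; [intro H; destruct (classic (sat M u q)) | ]; tauto. Qed.

Lemma sat_fexs N k : forall (q : form L) u,
  sat M u (fexs N k q) <-> exists f, sat M (override u N k f) q.
Proof.
  induction k as [|k IH]; intros q u; simpl.
  - split; [intro H; exists (fun _ => u 0) | intros [_ H]]; exact H.
  - rewrite IH; simpl; split.
    + intros [f [a Ha]]; exists (fun i => if Nat.eqb i k then a else f i).
      rewrite Nat.eqb_refl, (override_ext u N k _ f); [exact Ha|].
      intros i Hi; destruct (Nat.eqb_spec i k); [lia | reflexivity].
    + intros [f Hf]; exists f, (f k); exact Hf.
Qed.

Lemma sat_feq_some u x N k :
  sat M u (@feq_some L x N k) <-> exists j, j < k /\ u x = u (N + j).
Proof.
  induction k as [|k IH]; simpl feq_some.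
  - simpl; split; [tauto | intros [j [Hj _]]; lia].
  - rewrite sat_fdisj, IH; simpl; split.
    + intros [[j [Hj E]] | E]; [exists j | exists k]; split; auto; lia.
    + intros [j [Hj E]]; destruct (Nat.eq_dec j k) as [->|];
        [right | left; exists j; split]; auto; lia.
Qed.

Lemma sat_fclose n : forall (q : form L) v,
  sat M v (fclose n q) <-> forall w, (forall y, n <= y -> w y = v y) -> sat M w q.
Proof.
  induction n as [|n IH]; intros q v; simpl fclose.
  - split; [intros H w Hw | intro H; apply H; reflexivity].
    replace w with v; [exact H|].
    apply functional_extensionality; intro y; symmetry; apply Hw; lia.
  - rewrite sat_fall; setoid_rewrite IH; split.
    + intros H w Hw; apply (H (w n)); intros y Hy; unfold update.
      destruct (Nat.eqb_spec y n) as [->|]; [reflexivity | apply Hw; lia].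
    + intros H a w Hw; apply H; intros y Hy; rewrite Hw by lia; apply update_other; lia.
Qed.

End DerivedSemantics.

Lemma fexs_free {L : lang} N k : forall (q : form L) y,
  ffree y (fexs N k q) -> ffree y q /\ ~ (N <= y < N + k).
Proof.
  induction k as [|k IH]; intros q y H; simpl in *.
  - split; [exact H | lia].
  - destruct (IH _ _ H) as [[Hy Hq] Hout]; split; [exact Hq | lia].
Qed.

Lemma feq_some_free {L : lang} x N k y :
  ffree y (@feq_some L x N k) -> y = x \/ N <= y < N + k.
Proof.
  induction k as [|k IH]; simpl; [tauto|].
  intros [H|[H|H]]; [destruct (IH H) | | ]; (left; congruence) || (right; lia).
Qed.

Lemma fat_most_free {L : lang} x N k (q : form L) y : ffree y (fat_most x N k q) -> ffree y q.
Proof.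
  unfold fat_most; intro H; apply fexs_free in H; destruct H as [[Hxy [H|H]] Hout]; [exact H|].
  destruct (feq_some_free x N k y H); [congruence | lia].
Qed.

Lemma fclose_free {L : lang} n : forall (q : form L) y,
  ffree y (fclose n q) -> ffree y q /\ n <= y.
Proof.
  induction n as [|n IH]; intros q y H; simpl in *; [split; [exact H | lia]|].
  destruct H as [Hn H]; destruct (IH _ _ H); split; [assumption | lia].
Qed.

Definition has_at_most {A : Type} (k : nat) (S : A -> Prop) : Prop :=
  exists l : list A, length l <= k /\ forall a, S a -> In a l.

Definition small_or_cosmall {A : Type} (k : nat) (S : A -> Prop) : Prop :=
  has_at_most k S \/ has_at_most k (fun a => ~ S a).

Section Smallness.
Context {A : Type}.

Lemma has_at_most_finite k (S : A -> Prop) : has_at_most k S -> finite_set S.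
Proof. intros [l [_ Hl]]; exists l; exact Hl. Qed.

Lemma has_at_most_weaken k k' (S S' : A -> Prop) :
  k <= k' -> (forall a, S a -> S' a) -> has_at_most k S' -> has_at_most k' S.
Proof. intros Hk HS [l [Hl H]]; exists l; split; [lia | auto]. Qed.

Lemma has_at_most_enum (d : A) k (S : A -> Prop) :
  has_at_most k S <-> exists f : nat -> A, forall a, S a -> exists j, j < k /\ a = f j.
Proof.
  split.
  - intros [l [Hl H]]; exists (fun j => nth j l d); intros a Ha.
    destruct (In_nth l a d (H a Ha)) as [j [Hj E]]; exists j; split; [lia | auto].
  - intros [f Hf]; exists (map f (seq 0 k)); rewrite length_map, length_seq; split; [lia|].
    intros a Ha; destruct (Hf a Ha) as [j [Hj ->]]; apply in_map, in_seq; lia.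
Qed.

Lemma small_or_cosmall_iff k (S S' : A -> Prop) :
  (forall a, S a <-> S' a) -> small_or_cosmall k S -> small_or_cosmall k S'.
Proof.
  intros HS [H|H]; [left | right];
    apply (has_at_most_weaken k k _ _ (le_n k)) with (2 := H);
    intros a; rewrite (HS a); auto.
Qed.

Lemma small_or_cosmall_weaken k k' (S : A -> Prop) :
  k <= k' -> small_or_cosmall k S -> small_or_cosmall k' S.
Proof.
  intros Hk [H|H]; [left | right]; exact (has_at_most_weaken _ _ _ _ Hk (fun a h => h) H).
Qed.

Lemma small_or_cosmall_const (P : Prop) : small_or_cosmall 0 (fun _ : A => P).
Proof.
  destruct (classic P); [right | left]; exists []; split; simpl; auto.
Qed.

Lemma small_or_cosmall_single (c : A) (S : A -> Prop) :
  (forall a, S a -> a = c) -> small_or_cosmall 1 S.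
Proof.
  intro H; left; exists [c]; split; [simpl; lia | intros a Ha; left; symmetry; auto].
Qed.

Lemma small_or_cosmall_neg k (S : A -> Prop) :
  small_or_cosmall k S -> small_or_cosmall k (fun a => ~ S a).
Proof.
  intros [H|H]; [right | left]; [|exact H].
  exact (has_at_most_weaken _ _ _ _ (le_n k) (fun a h => NNPP _ h) H).
Qed.

Lemma small_or_cosmall_and k1 k2 (S1 S2 : A -> Prop) :
  small_or_cosmall k1 S1 -> small_or_cosmall k2 S2 ->
  small_or_cosmall (k1 + k2) (fun a => S1 a /\ S2 a).
Proof.
  intros [H1|H1]; [left; apply (has_at_most_weaken k1 _ _ S1); [lia | tauto | exact H1]|].
  intros [H2|H2]; [left; apply (has_at_most_weaken k2 _ _ S2); [lia | tauto | exact H2]|].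
  right; destruct H1 as [l1 [Hl1 H1]], H2 as [l2 [Hl2 H2]].
  exists (l1 ++ l2); split; [rewrite length_app; lia|].
  intros a Ha; apply in_or_app.
  destruct (classic (S1 a)); [right; apply H2 | left; apply H1]; tauto.
Qed.

End Smallness.

Lemma sat_fat_most {L : lang} (M : structure L) u x N k (q : form L) :
  x < N -> (forall y, ffree y q -> y < N) ->
  sat M u (fat_most x N k q) <-> has_at_most k (fun a => sat M (update u x a) q).
Proof.
  intros HxN HqN.
  assert (Hq : forall f a,
    sat M (update (override u N k f) x a) q <-> sat M (update u x a) q).
  { intros f a; apply sat_coincidence; intros y Hy; unfold update.
    destruct (Nat.eqb y x); [reflexivity | apply override_below, HqN, Hy]. }
  assert (Hsome : forall f a,
    sat M (update (override u N k f) x a) (feq_some x N k) <-> exists j, j < k /\ a = f j).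
  { intros f a; rewrite sat_feq_some.
    assert (Hat : forall j, j < k -> update (override u N k f) x a (N + j) = f j).
    { intros j Hj; rewrite update_other by lia; apply override_at, Hj. }
    rewrite update_same; split; intros [j [Hj E]]; exists j; rewrite ?Hat in *; auto. }
  unfold fat_most; rewrite sat_fexs, (has_at_most_enum (u 0)).
  setoid_rewrite sat_fall; setoid_rewrite sat_fimp.
  setoid_rewrite Hq; setoid_rewrite Hsome; reflexivity.
Qed.

Lemma sat_eq_var_small_or_cosmall {L : lang} (M : structure L) u x y (t : term L) :
  t = tvar x \/ ~ tfree x t ->
  small_or_cosmall 1 (fun a => sat M (update u x a) (feq (tvar y) t)).
Proof.
  simpl; intros Ht; destruct (Nat.eq_dec y x) as [->|Hyx]; destruct Ht as [->|Ht].
  - apply (small_or_cosmall_weaken 0); [lia|].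
    apply (small_or_cosmall_iff 0 (fun _ => True)); [|apply small_or_cosmall_const].
    intro a; simpl; rewrite update_same; tauto.
  - apply (small_or_cosmall_single (teval M u t)); intro a.
    rewrite update_same, teval_update_fresh by exact Ht; auto.
  - apply (small_or_cosmall_single (u y)); intro a.
    simpl; rewrite update_same, update_other by exact Hyx; auto.
  - apply (small_or_cosmall_weaken 0); [lia|].
    apply (small_or_cosmall_iff 0 (fun _ => u y = teval M u t));
      [|apply small_or_cosmall_const].
    intro a; rewrite update_other, teval_update_fresh by assumption; tauto.
Qed.

Lemma boolcomb_small_or_cosmall {L : lang} (M : structure L) x (psi : form L) :
  boolcomb psi ->
  exists K, forall u, small_or_cosmall K (fun a => sat M (update u x a) psi).
Proof.
  induction 1 as [| y z | y c t Hc | p _ [K IH] | p q _ [K1 IH1] _ [K2 IH2]].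
  - exists 0; intro u; exact (small_or_cosmall_const False).
  - exists 1; intro u; apply sat_eq_var_small_or_cosmall.
    destruct (Nat.eq_dec z x) as [->|Hzx]; [left | right]; simpl; auto.
  - exists 1; intro u; apply sat_eq_var_small_or_cosmall; right.
    simpl; intros [i _]; revert Hc; destruct i; discriminate.
  - exists K; intro u; exact (small_or_cosmall_neg _ _ (IH u)).
  - exists (K1 + K2); intro u; exact (small_or_cosmall_and _ _ _ _ (IH1 u) (IH2 u)).
Qed.

Section Reduct.
Variables (L : lang) (F R : Type) (af : F -> nat) (ar : R -> nat).
Local Notation L' := (ext L F R af ar).

Definition reduct (M : structure L') : structure L :=
  {| dom := M; fint := fun f => fint M (inl f); rint := fun r => rint M (inl r) |}.

Lemma teval_tr_term (M : structure L') v (t : term L) :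
  teval M v (tr_term L F R af ar t) = teval (reduct M) v t.
Proof.
  induction t as [n|f a IH]; simpl; [reflexivity|].
  f_equal; apply functional_extensionality; exact IH.
Qed.

Lemma sat_tr_form (M : structure L') (p : form L) : forall v,
  sat M v (tr_form L F R af ar p) <-> sat (reduct M) v p.
Proof.
  induction p as [| t1 t2 | r a | q IH | q1 IH1 q2 IH2 | n q IH]; intro v; simpl.
  - tauto.
  - rewrite !teval_tr_term; tauto.
  - replace (fun i => teval M v (tr_term L F R af ar (a i)))
      with (fun i => teval (reduct M) v (a i)); [tauto|].
    apply functional_extensionality; intro i; symmetry; apply teval_tr_term.
  - rewrite IH; tauto.
  - rewrite IH1, IH2; tauto.
  - split; intros [a Ha]; exists a; apply IH; exact Ha.
Qed.

Lemma complete_theory_mem_reduct (T : theory L) (T' : theory L') (M : structure L') v s :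
  complete_theory T -> (forall s, T s -> T' (tr_form L F R af ar s)) -> is_model M T' ->
  sentence s -> sat (reduct M) v s -> T s.
Proof.
  intros (_ & _ & _ & Hcomp) HTT' [_ HM] Hs Hsat.
  destruct (Hcomp s Hs) as [H|H]; [exact H | exfalso].
  apply (HM _ (HTT' _ H) v); apply sat_tr_form; exact Hsat.
Qed.

End Reduct.

Definition fsmall_or_cosmall {L : lang} (x N K : nat) (p : form L) : form L :=
  fclose N (fdisj (fat_most x N K p) (fat_most x N K (fneg p))).

Lemma fsmall_or_cosmall_sentence {L : lang} x N K (p : form L) :
  (forall y, ffree y p -> y < N) -> sentence (fsmall_or_cosmall x N K p).
Proof.
  intros HpN y Hy; apply fclose_free in Hy; destruct Hy as [Hy HNy].
  simpl in Hy; destruct Hy as [Hy|Hy]; apply fat_most_free, HpN in Hy; lia.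
Qed.

Lemma sat_fsmall_or_cosmall {L : lang} (M : structure L) v x N K (p : form L) :
  x < N -> (forall y, ffree y p -> y < N) ->
  sat M v (fsmall_or_cosmall x N K p) <->
  forall u, small_or_cosmall K (fun a => sat M (update u x a) p).
Proof.
  intros HxN HpN.
  assert (Hbody : forall u, sat M u (fdisj (fat_most x N K p) (fat_most x N K (fneg p))) <->
                            small_or_cosmall K (fun a => sat M (update u x a) p)).
  { intro u; rewrite sat_fdisj, !sat_fat_most by assumption; reflexivity. }
  split.
  - intros H u; apply Hbody.
    apply (sat_sentence M _ v u (fsmall_or_cosmall_sentence x N K p HpN)) in H.
    unfold fsmall_or_cosmall in H; rewrite sat_fclose in H; apply H; reflexivity.
  - intro H; unfold fsmall_or_cosmall; rewrite sat_fclose; intros w _; apply Hbody, H.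
Qed.

Theorem corollary3p8 (L : lang) (T : theory L) :
  complete_theory T -> constantizable_theory T -> strongly_minimal T.
Proof.
  intros HT Hconst M [_ HM] p x v.
  destruct (Hconst p)
    as (F & R & af & ar & T' & (_ & [M' HM'] & _) & HTT' & psi & Hpsi & _ & Hequiv).
  destruct (form_free_bound p) as [N0 HN0].
  set (N := S (N0 + x)).
  assert (HxN : x < N) by lia.
  assert (HpN : forall y, ffree y p -> y < N) by (intros y Hy; specialize (HN0 y Hy); lia).
  destruct (boolcomb_small_or_cosmall M' x psi Hpsi) as [K HK].
  assert (Hs : T (fsmall_or_cosmall x N K p)).
  { pose proof HM' as [[m] _].
    apply (complete_theory_mem_reduct L F R af ar T T' M' (fun _ => m)); auto.
    - apply fsmall_or_cosmall_sentence; exact HpN.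
    - apply sat_fsmall_or_cosmall; auto; intro u.
      apply (small_or_cosmall_iff _ _ _) with (2 := HK u); intro a.
      rewrite <- sat_tr_form; symmetry; apply Hequiv, HM'. }
  destruct (proj1 (sat_fsmall_or_cosmall M v x N K p HxN HpN) (HM _ Hs v) v) as [H|H];
    [left | right]; exact (has_at_most_finite _ _ H).
Qed.
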